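(* Let $L$ be a co-Heyting algebra and $X\subseteq L$ a subset which is compact for the codimetric topology. Then every monotonic (increasing or decreasing) sequence of elements of $X$ is convergent for the codimetric pseudometric.
   Context: A co-Heyting algebra is a bounded distributive lattice $(L,0,1,\vee,\wedge)$ such that $a-b=\min\{c\in L: a\le b\vee c\}$ exists for all $a,b$. Let $a\triangle b=(a-b)\vee(b-a)$. $\operatorname{Spec}L$ is the set of prime filters ordered by inclusion; height = foundation rank there; $\operatorname{codim}_La=\min\{\operatorname{height}\mathfrak p: a\in\mathfrak p\}$ ($+\infty$ if none). The codimetric pseudometric is $\operatorname{dist}_L(a,b)=2^{-\operatorname{codim}_L(a\triangle b)}$ if finite and $0$ otherwise; the codimetric topology is the topology it defines. *)

From mathcomp Require Import all_boot all_order.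
From Stdlib Require Import Reals ClassicalEpsilon.

Set Implicit Arguments.
Unset Strict Implicit.
Unset Printing Implicit Defensive.

Import Order.TTheory.
Local Open Scope order_scope.

Definition coHeyting_diff (d : Order.disp_t) (L : tbDistrLatticeType d)
  (sub : L -> L -> L) : Prop :=
  forall a b : L, a <= Order.join b (sub a b) /\
    (forall c : L, a <= Order.join b c -> sub a b <= c).

Definition symdiff (d : Order.disp_t) (L : tbDistrLatticeType d)
  (sub : L -> L -> L) (a b : L) : L := Order.join (sub a b) (sub b a).

Definition prime_filter (d : Order.disp_t) (L : tbDistrLatticeType d)
  (F : L -> Prop) : Prop :=
  [/\ F \top, ~ F \bot,
      (forall a b : L, F a -> a <= b -> F b),
      (forall a b : L, F a -> F b -> F (Order.meet a b)) &
      (forall a b : L, F (Order.join a b) -> F a \/ F b)].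

Definition strict_incl (T : Type) (q p : T -> Prop) : Prop :=
  (forall x, q x -> p x) /\ exists x, p x /\ ~ q x.

(* height_le n p : the foundation rank (height) of the prime filter p in
   Spec L (ordered by inclusion) is a finite ordinal <= n.
   height p = sup { height q + 1 | q prime, q strictly included in p }. *)
Fixpoint height_le (d : Order.disp_t) (L : tbDistrLatticeType d)
  (n : nat) (p : L -> Prop) : Prop :=
  match n with
  | 0 => forall q : L -> Prop, prime_filter q -> ~ strict_incl q p
  | n'.+1 => forall q : L -> Prop, prime_filter q -> strict_incl q p ->
             height_le n' q
  end.

Definition codim_le (d : Order.disp_t) (L : tbDistrLatticeType d)
  (a : L) (n : nat) : Prop :=
  exists p : L -> Prop, [/\ prime_filter p, p a & height_le n p].

Definition codim_leb (d : Order.disp_t) (L : tbDistrLatticeType d)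
  (a : L) (n : nat) : bool :=
  if excluded_middle_informative (codim_le a n) then true else false.

(* codim_L a : Some n if it is the finite number n, None otherwise
   (+infinity, or an infinite ordinal). *)
Definition codim (d : Order.disp_t) (L : tbDistrLatticeType d)
  (a : L) : option nat :=
  match excluded_middle_informative (exists n, codim_leb a n) with
  | left H => Some (ex_minn H)
  | right _ => None
  end.

Definition cdist (d : Order.disp_t) (L : tbDistrLatticeType d)
  (sub : L -> L -> L) (a b : L) : R :=
  match codim (symdiff sub a b) with
  | Some n => ((/ 2) ^ n)%R
  | None => 0%R
  end.

Definition cd_open (d : Order.disp_t) (L : tbDistrLatticeType d)
  (sub : L -> L -> L) (U : L -> Prop) : Prop :=
  forall x, U x -> exists e : R, (0 < e)%R /\
    forall y, (cdist sub x y < e)%R -> U y.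

Definition cd_compact (d : Order.disp_t) (L : tbDistrLatticeType d)
  (sub : L -> L -> L) (X : L -> Prop) : Prop :=
  forall C : (L -> Prop) -> Prop,
    (forall U, C U -> cd_open sub U) ->
    (forall x, X x -> exists U, C U /\ U x) ->
    exists s : seq (L -> Prop),
      (forall U, List.In U s -> C U) /\
      (forall x, X x -> exists U, List.In U s /\ U x).

Definition cd_convergent (d : Order.disp_t) (L : tbDistrLatticeType d)
  (sub : L -> L -> L) (u : nat -> L) : Prop :=
  exists l : L, forall e : R, (0 < e)%R ->
    exists N : nat, forall k : nat, leq N k -> (cdist sub (u k) l < e)%R.

Definition increasing_seq (d : Order.disp_t) (L : tbDistrLatticeType d)
  (u : nat -> L) : Prop := forall m n : nat, leq m n -> u m <= u n.

Definition decreasing_seq (d : Order.disp_t) (L : tbDistrLatticeType d)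
  (u : nat -> L) : Prop := forall m n : nat, leq m n -> u n <= u m.

(* Balls of the codimetric pseudometric are order-convex: if a <= m <= b then
   l triangle m <= (l triangle a) \/ (l triangle b), and a prime filter of small
   height containing a join contains one of the joinands.  Hence a monotone
   sequence converges to any of its cluster points.  A monotone sequence in a
   compact set has a cluster point: otherwise every point has a ball that the
   sequence eventually avoids, and a finite subcover of these balls would be
   avoided from some index on, although it covers every term. *)

From mathcomp Require Import all_boot all_order.
From Stdlib Require Import Reals Lra Lia Classical ClassicalEpsilon.

Import Order.TTheory.

Lemma pow_half_lt m n : m < n -> ((/ 2) ^ n < (/ 2) ^ m)%R.
Proof.
move=> /ssrnat.ltP lt_mn; rewrite !pow_inv; apply: Rinv_lt_contravar.
  by apply: Rmult_lt_0_compat; apply: pow_lt; lra.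
by apply: Rlt_pow; [lra | lia].
Qed.

Lemma pow_half_le {m n} : m <= n -> ((/ 2) ^ n <= (/ 2) ^ m)%R.
Proof.
rewrite leq_eqVlt => /orP [/eqP -> | lt_mn]; first lra.
exact/Rlt_le/pow_half_lt.
Qed.

Lemma pow_half_small {e} : (0 < e)%R -> exists N, ((/ 2) ^ N < e)%R.
Proof.
move=> e_gt0.
have [N HN] := pow_lt_1_zero (/ 2) ltac:(rewrite Rabs_pos_eq; lra) e e_gt0.
exists N; have := HN N (le_n N).
by rewrite Rabs_pos_eq //; apply: pow_le; lra.
Qed.

Lemma eventually_avoided_all (T : Type) (u : nat -> T) (s : seq (T -> Prop)) :
  (forall U, List.In U s -> exists K, forall k, K <= k -> ~ U (u k)) ->
  exists K, forall U, List.In U s -> forall k, K <= k -> ~ U (u k).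
Proof.
elim: s => [|U s IH] avoided; first by exists 0.
have [K1 avoid_U] := avoided U (or_introl erefl).
have [K2 avoid_s] := IH (fun V sV => avoided V (or_intror sV)).
exists (maxn K1 K2) => V [<- | sV] k le_k.
  by apply: avoid_U; apply: leq_trans le_k; apply: leq_maxl.
by apply: avoid_s => //; apply: leq_trans le_k; apply: leq_maxr.
Qed.

Section Codimetric.
Variables (d : Order.disp_t) (L : tbDistrLatticeType d) (sub : L -> L -> L).
Hypothesis subP : coHeyting_diff sub.

(* [codim_gt z N] says codim z > N, including the case codim z = +oo. *)
Definition codim_gt (z : L) (N : nat) : Prop :=
  forall n, n <= N -> ~ codim_le z n.

Lemma codim_lebP (z : L) n : codim_leb z n <-> codim_le z n.
Proof. by rewrite /codim_leb; case: excluded_middle_informative. Qed.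

Lemma codim_gt_cdist a b N :
  codim_gt (symdiff sub a b) N <-> (cdist sub a b < (/ 2) ^ N)%R.
Proof.
rewrite /cdist /codim; case: excluded_middle_informative => [ex_le|no_le].
  case: ex_minnP => m /codim_lebP le_m min_m; split.
    move=> gt_N; case: (leqP m N) => [le_mN | lt_Nm]; last exact: pow_half_lt.
    by case: (gt_N m le_mN).
  move=> lt_N n le_nN /codim_lebP /min_m le_mn.
  by have := pow_half_le (leq_trans le_mn le_nN); lra.
split=> [_ | _ n _ le_n]; first by apply: pow_lt; lra.
by apply: no_le; exists n; apply/codim_lebP.
Qed.

Lemma codim_gt_bot x N : (x <= \bot)%O -> codim_gt x N.
Proof.
move=> x_le0 n _ [p [[_ p_bot p_up _ _] p_x _]]; exact/p_bot/(p_up _ _ p_x).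
Qed.

Lemma codim_gt_join x y z N :
  (x <= Order.join y z)%O -> codim_gt y N -> codim_gt z N -> codim_gt x N.
Proof.
move=> x_le gt_y gt_z n le_nN [p [p_prime p_x hp]].
have [_ _ p_up _ p_join] := p_prime.
case: (p_join y z (p_up _ _ p_x x_le)) => [p_y | p_z].
  by apply: (gt_y n le_nN); exists p.
by apply: (gt_z n le_nN); exists p.
Qed.

Lemma sub_le_join a b c : (a <= Order.join b c -> sub a b <= c)%O.
Proof. exact: (proj2 (subP a b)). Qed.

Lemma le_join_sub a b : (a <= Order.join b (sub a b))%O.
Proof. exact: (proj1 (subP a b)). Qed.

Lemma subxx a : (sub a a <= \bot)%O.
Proof. exact/sub_le_join/leUl. Qed.

Lemma leB2r a b c : (a <= b -> sub a c <= sub b c)%O.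
Proof. by move=> le_ab; apply/sub_le_join/(le_trans le_ab)/le_join_sub. Qed.

Lemma leB2l a b c : (b <= c -> sub a c <= sub a b)%O.
Proof.
by move=> le_bc; apply/sub_le_join/(le_trans (le_join_sub a b))/leU2.
Qed.

Lemma subB_le x y z : (sub x z <= Order.join (sub x y) (sub y z))%O.
Proof.
apply/sub_le_join/(le_trans (le_join_sub x y)); rewrite leUx.
apply/andP; split; last by rewrite joinCA leUl.
by apply: (le_trans (le_join_sub y z)); rewrite leU2 // leUr.
Qed.

Lemma symdiffxx x : (symdiff sub x x <= \bot)%O.
Proof. by rewrite /symdiff leUx subxx. Qed.

Lemma symdiff_triangle x y z :
  (symdiff sub x z <= Order.join (symdiff sub x y) (symdiff sub y z))%O.
Proof.
rewrite /symdiff leUx; apply/andP; split.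
  by apply: (le_trans (subB_le x y z)); apply: leU2; apply: leUl.
by apply: (le_trans (subB_le z y x)); rewrite joinC; apply: leU2; apply: leUr.
Qed.

Lemma symdiff_between l a m b : (a <= m -> m <= b ->
  symdiff sub l m <= Order.join (symdiff sub l a) (symdiff sub l b))%O.
Proof.
move=> le_am le_mb; rewrite /symdiff leUx; apply/andP; split.
  by apply: (le_trans (leB2l l _ _ le_am)); apply: le_trans (leUl _ _) (leUl _ _).
by apply: (le_trans (leB2r _ _ l le_mb)); apply: le_trans (leUr _ _) (leUr _ _).
Qed.

(* The open ball of radius 2^-N around l. *)
Definition cd_ball (l : L) (N : nat) : L -> Prop :=
  fun y => codim_gt (symdiff sub l y) N.

Lemma cd_ball_center l N : cd_ball l N l.
Proof. exact/codim_gt_bot/symdiffxx. Qed.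

Lemma cd_ball_open l N : cd_open sub (cd_ball l N).
Proof.
move=> y ball_y; exists ((/ 2) ^ N)%R; split; first by apply: pow_lt; lra.
move=> z /codim_gt_cdist yz_small.
exact: codim_gt_join (symdiff_triangle l y z) ball_y yz_small.
Qed.

Lemma cd_ball_convex l N a m b : (a <= m)%O -> (m <= b)%O ->
  cd_ball l N a -> cd_ball l N b -> cd_ball l N m.
Proof.
by move=> le_am le_mb; apply/codim_gt_join/(symdiff_between l _ _ _ le_am le_mb).
Qed.

Definition cd_cluster (u : nat -> L) (l : L) : Prop :=
  forall N K, exists2 k, K <= k & cd_ball l N (u k).

Lemma monotone_cluster_convergent u l :
  increasing_seq u \/ decreasing_seq u -> cd_cluster u l -> cd_convergent sub u.
Proof.
move=> u_mono l_cluster; exists l => e e_gt0.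
have [N lt_Ne] := pow_half_small e_gt0.
have [k0 _ ball_k0] := l_cluster N 0.
exists k0 => m le_k0m.
have [k1 le_mk1 ball_k1] := l_cluster N m.
have ball_m : cd_ball l N (u m).
  case: u_mono => u_mono.
    exact: cd_ball_convex (u_mono _ _ le_k0m) (u_mono _ _ le_mk1) ball_k0 ball_k1.
  exact: cd_ball_convex (u_mono _ _ le_mk1) (u_mono _ _ le_k0m) ball_k1 ball_k0.
have /codim_gt_cdist := ball_m.
by rewrite /cdist /symdiff joinC; lra.
Qed.

Lemma not_cluster_avoided u l : ~ cd_cluster u l ->
  exists N K, forall k, K <= k -> ~ cd_ball l N (u k).
Proof.
move=> not_cluster; apply: NNPP => no_avoid; apply: not_cluster => N K.
apply: NNPP => no_k; apply: no_avoid; exists N, K => k le_Kk ball_k.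
by apply: no_k; exists k.
Qed.

Lemma cd_compact_cluster (X : L -> Prop) (u : nat -> L) :
  cd_compact sub X -> (forall n, X (u n)) -> exists l, cd_cluster u l.
Proof.
move=> X_compact X_u; apply: NNPP => no_cluster.
pose C U := (exists l N, U = cd_ball l N) /\
  exists K, forall k, K <= k -> ~ U (u k).
have C_open U : C U -> cd_open sub U.
  by move=> [[l [N ->]] _]; apply: cd_ball_open.
have C_cover x : X x -> exists U, C U /\ U x.
  move=> _; have [N [K avoid]] : exists N K, forall k, K <= k -> ~ cd_ball x N (u k).
    by apply: not_cluster_avoided => x_cluster; apply: no_cluster; exists x.
  exists (cd_ball x N); split; last exact: cd_ball_center.
  by split; [exists x, N | exists K].
have [s [s_C s_cover]] := X_compact C C_open C_cover.
have [K avoid] := @eventually_avoided_all _ u s (fun U sU => proj2 (s_C U sU)).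
have [U [sU U_uK]] := s_cover _ (X_u K).
exact: avoid U sU K (leqnn K) U_uK.
Qed.

End Codimetric.

Arguments monotone_cluster_convergent {d L sub} subP {u l}.
Arguments cd_compact_cluster {d L sub} subP {X u}.

Theorem corollary7p7 (d : Order.disp_t) (L : tbDistrLatticeType d)
  (sub : L -> L -> L) (Hsub : coHeyting_diff sub) (X : L -> Prop) :
  cd_compact sub X ->
  forall u : nat -> L, (forall n, X (u n)) ->
  (increasing_seq u \/ decreasing_seq u) ->
  cd_convergent sub u.
Proof.
move=> X_compact u X_u u_mono.
have [l l_cluster] := cd_compact_cluster Hsub X_compact X_u.
exact: monotone_cluster_convergent u_mono l_cluster.
Qed.
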